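(* Let $\mathcal{M}$ be a set of models, $c$ a cost function, $\mathcal{S}$ a step neighborhood function and $m_0$ a base model, as in the context. Assume there exist constants $c_{\min},c_{\max}$ with $0<c_{\min}\le c(m)\le c_{\max}$ for all $m\in\mathcal{M}$. Let $\gamma\ge1$ and $\lambda>0$, and for $K\ge0$ let $$z_\lambda(K)=\inf_{\bm{m}\in\mathcal{P}_K}\Big(c(m_K)+\lambda\sum_{k=1}^K\gamma^k c(m_k)\Big).$$ Then every $K_{\mathrm{opt}}\in\arg\min_{K\ge0} z_\lambda(K)$ satisfies $K_{\mathrm{opt}}\le K_{\max}$, where $$K_{\max}=\begin{cases}\dfrac{c_{\max}}{\lambda c_{\min}} & \text{if }\gamma=1,\\[2mm] \dfrac{\log\!\left(1+\frac{(\gamma-1)c_{\max}}{\lambda\gamma c_{\min}}\right)}{\log\gamma} & \text{if }\gamma>1.\end{cases}$$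
   Context: Setting: $\mathcal{M}$ is a set (of models), $c:\mathcal{M}\to(0,\infty)$ is a cost function, and $\mathcal{S}:\mathcal{M}\to 2^{\mathcal{M}}$ is a step neighborhood function with $\mathcal{S}(m)\neq\emptyset$ for all $m$. A fixed base model $m_0\in\mathcal{M}$ is given. An interpretable path of length $K\ge 0$ is a sequence $\bm{m}=(m_1,\dots,m_K)$ with $m_k\in\mathcal{S}(m_{k-1})$ for $1\le k\le K$; its final model is $m_K$ (which is $m_0$ when $K=0$, in which case the sum in $z_\lambda(0)$ is empty and $z_\lambda(0)=c(m_0)$). $\mathcal{P}_K$ denotes the set of interpretable paths of length $K$. *)

From HB Require Import structures.
From mathcomp Require Import all_boot all_order all_algebra.
From mathcomp Require Import all_classical all_reals all_analysis.
Set Implicit Arguments. Unset Strict Implicit. Unset Printing Implicit Defensive.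
Import Order.TTheory GRing.Theory Num.Theory.
Local Open Scope classical_set_scope.
Local Open Scope ring_scope.

Fixpoint is_interp_path (M : Type) (S : M -> set M) (mprev : M) (s : seq M) : Prop :=
  match s with
  | [::] => True
  | m :: s' => S mprev m /\ is_interp_path S m s'
  end.

Definition paths_K (M : Type) (S : M -> set M) (m0 : M) (K : nat) : set (seq M) :=
  [set s | size s = K /\ is_interp_path S m0 s].

(* objective: c(m_K) + lam * sum_{k=1}^K gam^k c(m_k); final model is last m0 s
   (= m0 when K = 0). nth m0 s k is m_{k+1}. *)
Definition path_obj (R : realType) (M : Type) (c : M -> R) (lam gam : R) (m0 : M)
  (s : seq M) : R :=
  c (last m0 s) + lam * \sum_(k < size s) gam ^+ k.+1 * c (nth m0 s k).

Definition z_lambda (R : realType) (M : Type) (c : M -> R) (S : M -> set M)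
  (lam gam : R) (m0 : M) (K : nat) : R :=
  inf [set path_obj c lam gam m0 s | s in paths_K S m0 K].

Definition K_max (R : realType) (cmin cmax lam gam : R) : R :=
  if gam == 1 then cmax / (lam * cmin)
  else ln (1 + (gam - 1) * cmax / (lam * gam * cmin)) / ln gam.

From HB Require Import structures.
From mathcomp Require Import all_boot all_order all_algebra.
From mathcomp Require Import all_classical all_reals all_analysis.
From mathcomp Require Import ring.
Import Order.TTheory GRing.Theory Num.Theory.
Local Open Scope classical_set_scope.
Local Open Scope ring_scope.

(* Every path of length K costs at least cmin (1 + lam (gam + ... + gam^K)),
   while the empty path costs c m0 <= cmax.  Optimality of K_opt against K = 0
   therefore bounds the geometric sum gam + ... + gam^K_opt by cmax / (lam cmin),
   and summing the geometric series turns this into the bound K_max. *)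

Lemma interp_path_exists {M : Type} {S : M -> set M} :
  (forall m, S m !=set0) -> forall K m, exists s, size s = K /\ is_interp_path S m s.
Proof.
move=> S_neq0; elim=> [|K IHK] m; first by exists [::].
have [m' Smm'] := S_neq0 m; have [s [sizes path_s]] := IHK m'.
by exists (m' :: s); rewrite /= sizes.
Qed.

Lemma geometric_sum_le_log (R : realType) (gam B : R) (K : nat) :
  1 < gam -> \sum_(k < K) gam ^+ k.+1 <= B ->
  K%:R <= ln (1 + (gam - 1) * B / gam) / ln gam.
Proof.
move=> gam_gt1 sum_le_B.
have gam_gt0 : 0 < gam by apply: lt_trans gam_gt1.
have sumE : \sum_(k < K) gam ^+ k.+1 = gam * \sum_(k < K) gam ^+ k.
  by rewrite mulr_sumr; apply: eq_bigr => k _; rewrite exprS.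
have expK_le : gam ^+ K <= 1 + (gam - 1) * B / gam.
  rewrite -lerBlDl subrX1 -mulrA ler_pM2l ?subr_gt0 //.
  by rewrite ler_pdivlMr // mulrC -sumE.
rewrite ler_pdivlMr ?ln_gt0 // mulr_natl -lnXn //.
by rewrite ler_ln ?posrE ?exprn_gt0 // (lt_le_trans _ expK_le) ?exprn_gt0.
Qed.

Section PathCost.
Variables (R : realType) (M : Type) (c : M -> R) (S : M -> set M).
Variables (lam gam : R) (m0 : M).

Lemma z_lambda0 : z_lambda c S lam gam m0 0 = c m0.
Proof.
have path_obj_nil : path_obj c lam gam m0 [::] = c m0.
  by rewrite /path_obj big_ord0 mulr0 addr0.
rewrite /z_lambda; suff -> : [set path_obj c lam gam m0 s | s in paths_K S m0 0]
  = [set c m0] by rewrite inf1.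
apply/seteqP; split=> [_ [s [/size0nil -> _] <-] //|_ ->].
by exists [::].
Qed.

Variable cmin : R.
Hypotheses (lam_ge0 : 0 <= lam) (gam_ge0 : 0 <= gam) (cmin_le : forall m, cmin <= c m).

Lemma path_obj_ge (s : seq M) :
  cmin * (1 + lam * \sum_(k < size s) gam ^+ k.+1) <= path_obj c lam gam m0 s.
Proof.
rewrite /path_obj mulrDr mulr1 mulrCA; apply: lerD => //.
apply: ler_wpM2l => //; rewrite mulr_sumr; apply: ler_sum => k _.
by rewrite mulrC ler_wpM2l ?exprn_ge0.
Qed.

Lemma z_lambda_ge (K : nat) : (forall m, S m !=set0) ->
  cmin * (1 + lam * \sum_(k < K) gam ^+ k.+1) <= z_lambda c S lam gam m0 K.
Proof.
move=> S_neq0; apply: lb_le_inf.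
  have [s Ps] := interp_path_exists S_neq0 K m0.
  by exists (path_obj c lam gam m0 s), s.
by move=> _ [s [<- _] <-]; apply: path_obj_ge.
Qed.

End PathCost.

Theorem proposition2 (R : realType) (M : Type) (c : M -> R) (S : M -> set M)
  (m0 : M) (cmin cmax gam lam : R) :
  (forall m, c m > 0) ->
  (forall m, S m !=set0) ->
  0 < cmin -> (forall m, cmin <= c m <= cmax) ->
  1 <= gam -> 0 < lam ->
  forall K_opt : nat,
    (forall K : nat, z_lambda c S lam gam m0 K_opt <= z_lambda c S lam gam m0 K) ->
    (K_opt%:R <= K_max cmin cmax lam gam).
Proof.
move=> _ S_neq0 cmin_gt0 c_bounds gam_ge1 lam_gt0 K K_opt.
have cmin_le m : cmin <= c m by case/andP: (c_bounds m).
have le_cmax m : c m <= cmax by case/andP: (c_bounds m).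
set G := \sum_(k < K) gam ^+ k.+1.
have z_K_ge : cmin * (1 + lam * G) <= z_lambda c S lam gam m0 K.
  by apply: z_lambda_ge => //; [exact: ltW | exact: le_trans gam_ge1].
have cost_le : cmin * (1 + lam * G) <= cmax.
  by apply: (le_trans z_K_ge); apply: (le_trans (K_opt 0)); rewrite z_lambda0.
have G_le : G <= cmax / (lam * cmin).
  rewrite ler_pdivlMr ?mulr_gt0 // (mulrC G) -mulrA mulrCA.
  by apply: le_trans cost_le; rewrite mulrDr mulr1 lerDr ltW.
rewrite /K_max; case: eqP => [gam1|/eqP gam_neq1].
  move: G_le; rewrite /G gam1; under eq_bigr do rewrite expr1n.
  by rewrite sumr_const card_ord.
have gam_gt1 : 1 < gam by rewrite lt_neqAle eq_sym gam_neq1.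
have -> : (gam - 1) * cmax / (lam * gam * cmin) = (gam - 1) * (cmax / (lam * cmin)) / gam.
  by field; rewrite ?gt_eqF // (lt_trans ltr01 gam_gt1).
exact: geometric_sum_le_log.
Qed.
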